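(* Let $q>1$. There is no radially symmetric $u\in C^{4}(\mathbb{R}^{2})$, $u>0$, solving $\Delta^{2}u+u^{-q}=0$ in $\mathbb{R}^{2}$. *)

From Stdlib Require Import Reals.
From Coquelicot Require Import Coquelicot.
Open Scope R_scope.

Definition dx (f : R -> R -> R) : R -> R -> R :=
  fun x y => Derive (fun t => f t y) x.
Definition dy (f : R -> R -> R) : R -> R -> R :=
  fun x y => Derive (fun t => f x t) y.

Definition cont2 (f : R -> R -> R) : Prop :=
  forall p : R * R, continuous (fun q : R * R => f (fst q) (snd q)) p.

Fixpoint Ck (k : nat) (f : R -> R -> R) : Prop :=
  match k with
  | O => cont2 f
  | S k' => cont2 f
            /\ (forall x y, ex_derive (fun t => f t y) x)
            /\ (forall x y, ex_derive (fun t => f x t) y)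
            /\ Ck k' (dx f) /\ Ck k' (dy f)
  end.

Definition laplacian (f : R -> R -> R) : R -> R -> R :=
  fun x y => dx (dx f) x y + dy (dy f) x y.

Definition bilaplacian (f : R -> R -> R) : R -> R -> R :=
  laplacian (laplacian f).

Definition radial (f : R -> R -> R) : Prop :=
  forall x y x' y', x ^ 2 + y ^ 2 = x' ^ 2 + y' ^ 2 -> f x y = f x' y'.

From Stdlib Require Import Reals Lra FunctionalExtensionality.
From Coquelicot Require Import Coquelicot.
Open Scope R_scope.

(* Write  w = Δu.  For a radial C² function v with profile h(r) = v(r,0) the
   Laplacian is  Δv = h'' + h'/r = (r h')'/r  for r > 0, and Δv is again radial.
   Since  Δw = -u^(-q) < 0,  the flux  r g'(r)  of the profile g of w is strictly
   decreasing and vanishes at r = 0, hence  g'(r) <= -c/r  for r >= 1 and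
   g(r) <= g(1) - c ln r:  eventually  Δu <= -1.  Then the flux of the profile f
   of u satisfies  r f'(r) + r²/2 <= A,  so eventually  f' <= -1  and f becomes
   negative, contradicting u > 0.  Only the positivity of u^(-q) is used. *)

Lemma mean_value (h dh : R -> R) (a b : R) : a < b ->
  (forall x, a <= x <= b -> is_derive h x (dh x)) ->
  exists c, a < c < b /\ h b - h a = dh c * (b - a).
Proof.
  intros Hab Hd.
  destruct (MVT_cor2 h dh a b Hab) as [c [E Hc]].
  - intros x Hx. apply is_derive_Reals, Hd, Hx.
  - exists c; split; assumption.
Qed.

Lemma nonincreasing_of_derive_nonpos (h dh : R -> R) (a b : R) : a <= b ->
  (forall x, a <= x <= b -> is_derive h x (dh x)) ->
  (forall x, a < x < b -> dh x <= 0) -> h b <= h a.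
Proof.
  intros Hab Hd Hneg.
  destruct (Req_dec a b) as [<-|Hne]; [lra|].
  destruct (mean_value h dh a b) as [c [Hc E]]; [lra|exact Hd|].
  specialize (Hneg c Hc). nra.
Qed.

Lemma Ck_weaken (k : nat) (f : R -> R -> R) : Ck (S k) f -> Ck k f.
Proof.
  revert f; induction k as [|k IH]; intros f Hf.
  - exact (proj1 Hf).
  - destruct Hf as [Hc [Hx [Hy [Hdx Hdy]]]].
    repeat split; try assumption; apply IH; assumption.
Qed.

Lemma dx_plus (f g : R -> R -> R) :
  (forall x y, ex_derive (fun t => f t y) x) ->
  (forall x y, ex_derive (fun t => g t y) x) ->
  dx (fun x y => f x y + g x y) = fun x y => dx f x y + dx g x y.
Proof.
  intros Hf Hg. apply functional_extensionality; intros x.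
  apply functional_extensionality; intros y. apply Derive_plus; auto.
Qed.

Lemma dy_plus (f g : R -> R -> R) :
  (forall x y, ex_derive (fun t => f x t) y) ->
  (forall x y, ex_derive (fun t => g x t) y) ->
  dy (fun x y => f x y + g x y) = fun x y => dy f x y + dy g x y.
Proof.
  intros Hf Hg. apply functional_extensionality; intros x.
  apply functional_extensionality; intros y. apply Derive_plus; auto.
Qed.

Lemma cont2_plus (f g : R -> R -> R) :
  cont2 f -> cont2 g -> cont2 (fun x y => f x y + g x y).
Proof.
  intros Hf Hg p.
  exact (continuous_plus (fun q => f (fst q) (snd q)) (fun q => g (fst q) (snd q)) p (Hf p) (Hg p)).
Qed.

Lemma Ck_plus (k : nat) (f g : R -> R -> R) :
  Ck k f -> Ck k g -> Ck k (fun x y => f x y + g x y).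
Proof.
  revert f g; induction k as [|k IH]; intros f g Hf Hg.
  - apply cont2_plus; assumption.
  - destruct Hf as [Hfc [Hfx [Hfy [Hfdx Hfdy]]]].
    destruct Hg as [Hgc [Hgx [Hgy [Hgdx Hgdy]]]].
    split; [apply cont2_plus; assumption|].
    split; [intros; apply (ex_derive_plus (fun t => f t y) (fun t => g t y)); auto|].
    split; [intros; apply (ex_derive_plus (fun t => f x t) (fun t => g x t)); auto|].
    rewrite dx_plus, dy_plus by assumption. split; apply IH; assumption.
Qed.

Lemma Ck_laplacian (k : nat) (u : R -> R -> R) : Ck (S (S k)) u -> Ck k (laplacian u).
Proof.
  intros [_ [_ [_ [[_ [_ [_ [Hxx _]]]] [_ [_ [_ [_ Hyy]]]]]]]].
  exact (Ck_plus k _ _ Hxx Hyy).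
Qed.
(* The radius  r(t) = sqrt (t² + c),  with c = y² the contribution of the frozen coordinate. *)
Lemma sqrt_sq_sum (a c : R) : 0 < a ^ 2 + c -> sqrt (a ^ 2 + c) ^ 2 = a ^ 2 + c.
Proof. intros H. rewrite <- Rsqr_pow2. apply Rsqr_sqrt. lra. Qed.

(* Away from the origin the radius stays positive nearby, so radial formulas hold locally. *)
Lemma locally_radius_pos (a c : R) : 0 < a ^ 2 + c -> locally a (fun t => 0 < t ^ 2 + c).
Proof.
  intros H.
  assert (Hcont : continuous (fun t => t ^ 2 + c) a)
    by (apply (ex_derive_continuous (fun t => t ^ 2 + c)); auto_derive; exact I).
  exact (Hcont (fun y => 0 < y) (open_gt 0 _ H)).
Qed.

Lemma is_derive_radius_comp (h : R -> R) (dh a c : R) : 0 < a ^ 2 + c ->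
  is_derive h (sqrt (a ^ 2 + c)) dh ->
  is_derive (fun t => h (sqrt (t ^ 2 + c))) a (dh * a / sqrt (a ^ 2 + c)).
Proof.
  intros H Hh. assert (Hs : 0 < sqrt (a ^ 2 + c)) by (apply sqrt_lt_R0; exact H).
  assert (Hr : is_derive (fun t => sqrt (t ^ 2 + c)) a (2 * a / (2 * sqrt (a ^ 2 + c)))).
  { apply (is_derive_sqrt (fun t => t ^ 2 + c)); [auto_derive; [exact I | ring] | exact H]. }
  replace (dh * a / sqrt (a ^ 2 + c)) with (2 * a / (2 * sqrt (a ^ 2 + c)) * dh) by (field; lra).
  exact (is_derive_comp h _ a dh _ Hh Hr).
Qed.

Lemma is_derive_radius_ratio (a c : R) : 0 < a ^ 2 + c ->
  is_derive (fun t => t / sqrt (t ^ 2 + c)) a (c / sqrt (a ^ 2 + c) ^ 3).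
Proof.
  intros H. assert (Hs : 0 < sqrt (a ^ 2 + c)) by (apply sqrt_lt_R0; exact H).
  assert (Hq := sqrt_sq_sum a c H).
  evar (l : R).
  assert (E : is_derive (fun t => t / sqrt (t ^ 2 + c)) a l).
  { auto_derive; replace (a * (a * 1)) with (a ^ 2) by ring;
      [repeat split; lra | unfold l; reflexivity]. }
  replace (c / sqrt (a ^ 2 + c) ^ 3) with l; [exact E|]. unfold l.
  set (r := sqrt (a ^ 2 + c)) in *. replace c with (r ^ 2 - a ^ 2) by lra. field. lra.
Qed.

Section RadialLaplacian.

Variable v : R -> R -> R.
Hypothesis v_radial : radial v.

Lemma radial_swap (x y : R) : v x y = v y x.
Proof. apply v_radial. ring. Qed.

Lemma radial_axis (a b : R) : v a b = v (sqrt (a ^ 2 + b ^ 2)) 0.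
Proof.
  apply v_radial. rewrite pow2_sqrt by nra. ring.
Qed.

Lemma dyy_radial (x y : R) : dy (dy v) x y = dx (dx v) y x.
Proof.
  unfold dy at 1. apply Derive_ext. intros t.
  unfold dy, dx. apply Derive_ext. intros s. apply radial_swap.
Qed.

Hypothesis v_C2 : Ck 2 v.

Lemma radial_profile_derive (s : R) : is_derive (fun t => v t 0) s (dx v s 0).
Proof. apply Derive_correct. apply (proj1 (proj2 v_C2)). Qed.

Lemma radial_profile_derive2 (s : R) : is_derive (fun t => dx v t 0) s (dx (dx v) s 0).
Proof.
  apply Derive_correct. destruct v_C2 as [_ [_ [_ [[_ [Hx _]] _]]]]. apply Hx.
Qed.

Lemma dx_radial (a b : R) : 0 < a ^ 2 + b ^ 2 ->
  dx v a b = dx v (sqrt (a ^ 2 + b ^ 2)) 0 * a / sqrt (a ^ 2 + b ^ 2).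
Proof.
  intros H. unfold dx at 1. apply is_derive_unique.
  eapply is_derive_ext; [intros t; symmetry; apply radial_axis|].
  apply (is_derive_radius_comp (fun s => v s 0)); [exact H | apply radial_profile_derive].
Qed.

Lemma dxx_radial (a b : R) : 0 < a ^ 2 + b ^ 2 ->
  dx (dx v) a b = dx (dx v) (sqrt (a ^ 2 + b ^ 2)) 0 * a ^ 2 / (a ^ 2 + b ^ 2)
                  + dx v (sqrt (a ^ 2 + b ^ 2)) 0 * b ^ 2 / sqrt (a ^ 2 + b ^ 2) ^ 3.
Proof.
  intros H. assert (Hs : 0 < sqrt (a ^ 2 + b ^ 2)) by (apply sqrt_lt_R0; exact H).
  assert (Hq := sqrt_sq_sum a (b ^ 2) H).
  unfold dx at 1. apply is_derive_unique.
  apply (is_derive_ext_loc (fun t => dx v (sqrt (t ^ 2 + b ^ 2)) 0 * (t / sqrt (t ^ 2 + b ^ 2)))).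
  { apply (filter_imp (fun t => 0 < t ^ 2 + b ^ 2)); [|exact (locally_radius_pos a _ H)].
    intros t Ht; cbv beta. rewrite (dx_radial t b Ht). unfold Rdiv; symmetry; apply Rmult_assoc. }
  set (r := sqrt (a ^ 2 + b ^ 2)) in *.
  replace (dx (dx v) r 0 * a ^ 2 / (a ^ 2 + b ^ 2) + dx v r 0 * b ^ 2 / r ^ 3)
    with (plus (mult (dx (dx v) r 0 * a / r) (a / r)) (mult (dx v r 0) (b ^ 2 / r ^ 3)))
    by (rewrite <- Hq; unfold plus, mult; simpl; field; lra).
  apply (is_derive_mult (fun t => dx v (sqrt (t ^ 2 + b ^ 2)) 0) (fun t => t / sqrt (t ^ 2 + b ^ 2))).
  - apply (is_derive_radius_comp (fun s => dx v s 0)); [exact H | apply radial_profile_derive2].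
  - apply is_derive_radius_ratio; exact H.
  - intros; apply Rmult_comm.
Qed.

Lemma laplacian_radial (x y : R) : 0 < x ^ 2 + y ^ 2 ->
  laplacian v x y = dx (dx v) (sqrt (x ^ 2 + y ^ 2)) 0
                    + dx v (sqrt (x ^ 2 + y ^ 2)) 0 / sqrt (x ^ 2 + y ^ 2).
Proof.
  intros H. assert (Hs : 0 < sqrt (x ^ 2 + y ^ 2)) by (apply sqrt_lt_R0; exact H).
  assert (Hq := sqrt_sq_sum x (y ^ 2) H).
  unfold laplacian. rewrite dyy_radial, dxx_radial, (dxx_radial y x) by lra.
  replace (y ^ 2 + x ^ 2) with (x ^ 2 + y ^ 2) by ring.
  set (r := sqrt (x ^ 2 + y ^ 2)) in *. replace (x ^ 2) with (r ^ 2 - y ^ 2) by lra. field. lra.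
Qed.

Lemma laplacian_radial_axis (x : R) : 0 < x ->
  laplacian v x 0 = dx (dx v) x 0 + dx v x 0 / x.
Proof.
  intros H. rewrite laplacian_radial by nra.
  replace (x ^ 2 + 0 ^ 2) with (x ^ 2) by ring. rewrite sqrt_pow2 by lra. reflexivity.
Qed.

Lemma radial_laplacian : radial (laplacian v).
Proof.
  intros x y x' y' E.
  destruct (Req_dec (x ^ 2 + y ^ 2) 0) as [Z|Z].
  - assert (x = 0 /\ y = 0 /\ x' = 0 /\ y' = 0) as (-> & -> & -> & ->) by (repeat split; nra).
    reflexivity.
  - assert (0 < x ^ 2 + y ^ 2) by nra.
    rewrite !laplacian_radial, E by lra. reflexivity.
Qed.

End RadialLaplacian.

Lemma is_derive_flux (h1 : R -> R) (dh1 k y : R) : is_derive h1 y dh1 ->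
  is_derive (fun x => x * h1 x + k * x ^ 2 / 2) y (h1 y + y * dh1 + k * y).
Proof.
  intros Hd. auto_derive.
  - exists dh1; exact Hd.
  - replace (Derive (fun x : R => h1 x) y) with dh1 by (symmetry; apply is_derive_unique, Hd).
    field.
Qed.

Lemma flux_nonincreasing (h1 h2 : R -> R) (k a : R) : 0 < a ->
  (forall x, a <= x -> is_derive h1 x (h2 x)) ->
  (forall x, a <= x -> h2 x + h1 x / x <= - k) ->
  forall x, a <= x -> x * h1 x + k * x ^ 2 / 2 <= a * h1 a + k * a ^ 2 / 2.
Proof.
  intros Ha Hd Hlap x Hx.
  apply (nonincreasing_of_derive_nonpos (fun x => x * h1 x + k * x ^ 2 / 2)
           (fun y => h1 y + y * h2 y + k * y)); [exact Hx | |].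
  - intros y Hy. apply is_derive_flux, Hd. lra.
  - intros y Hy. specialize (Hlap y ltac:(lra)).
    replace (h1 y + y * h2 y + k * y) with (y * (h2 y + h1 y / y + k)) by (field; lra).
    nra.
Qed.

(* If the radial Laplacian is negative for x > 0, the flux, which vanishes at 0,
   is negative at 1; hence h1(1) < 0. *)
Lemma flux_negative (h1 h2 : R -> R) :
  (forall x, is_derive h1 x (h2 x)) ->
  (forall x, 0 < x -> h2 x + h1 x / x < 0) -> h1 1 < 0.
Proof.
  intros Hd Hlap.
  destruct (mean_value (fun x => x * h1 x + 0 * x ^ 2 / 2)
              (fun y => h1 y + y * h2 y + 0 * y) 0 1) as [c [Hc E]].
  - lra.
  - intros y _. apply is_derive_flux, Hd.
  - specialize (Hlap c ltac:(lra)).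
    replace (h1 c + c * h2 c + 0 * c) with (c * (h2 c + h1 c / c)) in E by (field; lra).
    nra.
Qed.

Lemma log_decay (g g1 : R -> R) (c : R) :
  (forall x, 1 <= x -> is_derive g x (g1 x)) ->
  (forall x, 1 <= x -> g1 x <= - c / x) ->
  forall x, 1 <= x -> g x <= g 1 - c * ln x.
Proof.
  intros Hd Hg1 x Hx.
  assert (H : g x + c * ln x <= g 1 + c * ln 1).
  { apply (nonincreasing_of_derive_nonpos (fun x => g x + c * ln x)
             (fun y => g1 y + c / y)); [exact Hx | |].
    - intros y Hy. apply (is_derive_plus g (fun t => c * ln t)); [apply Hd; lra|].
      auto_derive; [lra | field; lra].
    - intros y Hy. specialize (Hg1 y ltac:(lra)). lra. }
  rewrite ln_1 in H. lra.
Qed.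

Lemma radial_superharmonic_profile (g g1 g2 : R -> R) :
  (forall x, is_derive g x (g1 x)) -> (forall x, is_derive g1 x (g2 x)) ->
  (forall x, 0 < x -> g2 x + g1 x / x < 0) ->
  exists X, 0 < X /\ forall x, X <= x -> g x <= -1.
Proof.
  intros Hg Hg1 Hlap.
  set (c := - g1 1).
  assert (Hc : 0 < c) by (unfold c; generalize (flux_negative g1 g2 Hg1 Hlap); lra).
  assert (Hdecay : forall x, 1 <= x -> g1 x <= - c / x).
  { intros x Hx.
    assert (F : x * g1 x + 0 * x ^ 2 / 2 <= 1 * g1 1 + 0 * 1 ^ 2 / 2).
    { apply (flux_nonincreasing g1 g2); [lra | intros; apply Hg1 | | exact Hx].
      intros y Hy. generalize (Hlap y ltac:(lra)). lra. }
    apply (Rmult_le_reg_l x); [lra|]. unfold c. field_simplify; lra. }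
  set (X := exp (Rabs ((g 1 + 1) / c))).
  assert (HX : 1 + Rabs ((g 1 + 1) / c) <= X) by apply exp_ineq1_le.
  exists X. split; [apply exp_pos|]. intros x Hx.
  assert (Hln : (g 1 + 1) / c <= ln x).
  { apply Rle_trans with (ln X); [unfold X; rewrite ln_exp; apply Rle_abs|].
    apply ln_le; [apply exp_pos | exact Hx]. }
  assert (Hx1 : 1 <= x) by (generalize (Rabs_pos ((g 1 + 1) / c)); lra).
  assert (Hlog := log_decay g g1 c (fun x _ => Hg x) Hdecay x Hx1).
  assert (g 1 + 1 <= c * ln x).
  { replace (g 1 + 1) with (c * ((g 1 + 1) / c)) by (field; lra).
    apply Rmult_le_compat_l; lra. }
  lra.
Qed.

Lemma radial_slope_eventually (f1 f2 : R -> R) (X : R) : 0 < X ->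
  (forall x, X <= x -> is_derive f1 x (f2 x)) ->
  (forall x, X <= x -> f2 x + f1 x / x <= -1) ->
  exists Y, forall x, Y <= x -> f1 x <= -1.
Proof.
  intros HX Hd Hlap.
  set (A := X * f1 X + 1 * X ^ 2 / 2).
  exists (Rmax X (2 * (Rabs A + 1))). intros x Hx.
  assert (HxX : X <= x) by (eapply Rle_trans; [apply Rmax_l | exact Hx]).
  assert (HxA : 2 * (Rabs A + 1) <= x) by (eapply Rle_trans; [apply Rmax_r | exact Hx]).
  assert (F := flux_nonincreasing f1 f2 1 X HX Hd Hlap x HxX). fold A in F.
  assert (A <= Rabs A) by apply Rle_abs.
  assert (0 <= Rabs A) by apply Rabs_pos.
  assert (x * f1 x <= x * -1) by nra.
  apply (Rmult_le_reg_l x); lra.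
Qed.

Lemma eventually_negative (f f1 : R -> R) (Y : R) :
  (forall x, Y <= x -> is_derive f x (f1 x)) ->
  (forall x, Y <= x -> f1 x <= -1) -> exists x, f x < 0.
Proof.
  intros Hd Hf1.
  set (x := Y + Rabs (f Y) + 1).
  assert (Hx : Y <= x) by (unfold x; generalize (Rabs_pos (f Y)); lra).
  assert (H : f x + x <= f Y + Y).
  { apply (nonincreasing_of_derive_nonpos (fun t => f t + t) (fun t => f1 t + 1)); [exact Hx | |].
    - intros t Ht. apply (is_derive_plus f (fun t => t)); [apply Hd; lra | auto_derive; reflexivity].
    - intros t Ht. generalize (Hf1 t ltac:(lra)). lra. }
  exists x. generalize (Rle_abs (f Y)). unfold x in *. lra.
Qed.

Theorem mainTheorem19 (q : R) (hq : 1 < q) :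
  ~ (exists u : R -> R -> R,
       Ck 4 u /\ radial u /\ (forall x y, 0 < u x y) /\
       (forall x y, bilaplacian u x y + Rpower (u x y) (- q) = 0)).
Proof.
  intros [u [Hu [Hrad [Hpos Heq]]]].
  set (w := laplacian u).
  assert (Hu2 : Ck 2 u) by (apply Ck_weaken, Ck_weaken, Hu).
  assert (Hw2 : Ck 2 w) by (apply Ck_laplacian, Hu).
  assert (Hwrad : radial w) by (apply radial_laplacian; assumption).
  destruct (radial_superharmonic_profile (fun s => w s 0) (fun s => dx w s 0)
              (fun s => dx (dx w) s 0) (radial_profile_derive w Hw2)
              (radial_profile_derive2 w Hw2)) as [X [HX Hw]].
  { intros x Hx. rewrite <- laplacian_radial_axis by assumption.
    generalize (Heq x 0). unfold bilaplacian, Rpower. fold w.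
    generalize (exp_pos (- q * ln (u x 0))). lra. }
  destruct (radial_slope_eventually (fun s => dx u s 0) (fun s => dx (dx u) s 0) X HX
              (fun x _ => radial_profile_derive2 u Hu2 x)) as [Y HY].
  { intros x Hx. rewrite <- laplacian_radial_axis by (assumption || lra). apply Hw, Hx. }
  destruct (eventually_negative (fun s => u s 0) (fun s => dx u s 0) Y
              (fun x _ => radial_profile_derive u Hu2 x) HY) as [x Hx].
  generalize (Hpos x 0). lra.
Qed.
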